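(* Fix a prime $p$. Let $E/\mathbb{Q}$ be an elliptic curve with a fixed Weierstrass model (integral coefficients) and let $P\in E(\mathbb{Q})$, $P\neq O$. Write $P=(a/d^2,b/d^3)$ and, for $n\ge1$, $u_n=\frac{d^{n^2}f_n(P)}{d_n}$, where $f_n$ is the $n$-th division polynomial and $d_n=d(nP)$. Then $$P\in E^0(\mathbb{Q}_p)\iff u_2\in\mathbb{Z}_p^\times.$$ In particular, $C_E(P)=\min\{n: |u_2(nP)|=1\}$.
   Context: A point $R\ne O$ of $E(\mathbb{Q})$ is written uniquely as $R=(a/d^2,b/d^3)$ with $a,b,d\in\mathbb{Z}$, $d>0$, $\gcd(a,d)=\gcd(b,d)=1$, and $d(R)=d$. $E^0(\mathbb{Q}_p)$ is the set of points of $E(\mathbb{Q}_p)$ with non-singular reduction mod $p$; $E^0(\mathbb{Q})$ is the set of points of $E(\mathbb{Q})$ with non-singular reduction at every prime; $C_E(P)=\min\{n\ge1: nP\in E^0(\mathbb{Q})\}$. The division polynomial $f_n$ is the one relative to the invariant differential, with $f_2=2y+a_1x+a_3$; $u_2(nP)$ denotes the quantity $u_2$ computed for the point $nP$, and $|\cdot|$ is the ordinary absolute value on $\mathbb{Q}$. *)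

From HB Require Import structures.
From mathcomp Require Import all_boot all_order all_algebra.
Set Implicit Arguments. Unset Strict Implicit. Unset Printing Implicit Defensive.
Import Order.TTheory GRing.Theory Num.Theory.
Local Open Scope ring_scope.

(* A Weierstrass model with integral coefficients
   y^2 + a1 x y + a3 y = x^3 + a2 x^2 + a4 x + a6. *)
Record wcurve := WCurve { a1 : int; a2 : int; a3 : int; a4 : int; a6 : int }.

Definition disc (E : wcurve) : int :=
  let b2 := a1 E ^+ 2 + 4 * a2 E in
  let b4 := 2 * a4 E + a1 E * a3 E in
  let b6 := a3 E ^+ 2 + 4 * a6 E in
  let b8 := a1 E ^+ 2 * a6 E + 4 * a2 E * a6 E - a1 E * a3 E * a4 E
            + a2 E * a3 E ^+ 2 - a4 E ^+ 2 in
  - b2 ^+ 2 * b8 - 8 * b4 ^+ 3 - 27 * b6 ^+ 2 + 9 * b2 * b4 * b6.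

(* Rational points: None is the point at infinity O. *)
Definition point := option (rat * rat).

Definition cq (z : int) : rat := z%:~R.

Definition on_curve (E : wcurve) (R : point) : bool :=
  match R with
  | None => true
  | Some (x, y) => y ^+ 2 + cq (a1 E) * x * y + cq (a3 E) * y ==
                   x ^+ 3 + cq (a2 E) * x ^+ 2 + cq (a4 E) * x + cq (a6 E)
  end.

(* Partial derivatives of F = y^2 + a1xy + a3y - x^3 - a2x^2 - a4x - a6. *)
Definition Fy (E : wcurve) (x y : rat) : rat := 2 * y + cq (a1 E) * x + cq (a3 E).
Definition Fx (E : wcurve) (x y : rat) : rat :=
  cq (a1 E) * y - 3 * x ^+ 2 - 2 * cq (a2 E) * x - cq (a4 E).

Definition addpt (E : wcurve) (P Q : point) : point :=
  match P, Q with
  | None, _ => Q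
  | _, None => P
  | Some (x1, y1), Some (x2, y2) =>
    if (x1 == x2) && (y1 + y2 + cq (a1 E) * x2 + cq (a3 E) == 0) then None
    else
      let l := if x1 == x2 then
                 (3 * x1 ^+ 2 + 2 * cq (a2 E) * x1 + cq (a4 E) - cq (a1 E) * y1)
                   / (2 * y1 + cq (a1 E) * x1 + cq (a3 E))
               else (y2 - y1) / (x2 - x1) in
      let nu := y1 - l * x1 in
      let x3 := l ^+ 2 + cq (a1 E) * l - cq (a2 E) - x1 - x2 in
      Some (x3, - (l + cq (a1 E)) * x3 - nu - cq (a3 E))
  end.

Definition mulpt (E : wcurve) (n : nat) (P : point) : point :=
  iter n (addpt E P) None.

Definition isqrt (n : nat) : nat := (\max_(k < n.+1 | k * k <= n) k)%N.

(* d(R): R = (a/d^2, b/d^3) in lowest terms, d > 0, so d^2 = denominator of x.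
   Convention d(O) = 1 (never used in the theorem, where 2P <> O). *)
Definition dpt (R : point) : nat :=
  match R with
  | None => 1%N
  | Some (x, _) => isqrt `|denq x|%N
  end.

(* Second division polynomial f_2 = 2y + a1 x + a3 (0 at O by convention). *)
Definition f2 (E : wcurve) (R : point) : rat :=
  match R with None => 0 | Some (x, y) => Fy E x y end.

Definition u2 (E : wcurve) (R : point) : rat :=
  (dpt R)%:R ^+ 4 * f2 E R / (dpt (addpt E R R))%:R.

Definition p_integral (p : nat) (r : rat) : bool := ~~ (p %| `|denq r|)%N.
Definition p_unit (p : nat) (r : rat) : bool :=
  ~~ (p %| `|numq r|)%N && ~~ (p %| `|denq r|)%N.
(* for p-integral r : r is 0 mod p *)
Definition p_zero (p : nat) (r : rat) : bool := (p %| `|numq r|)%N.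

(* R in E^0(Q_p): the reduction mod p of R (w.r.t. the fixed model) is a
   non-singular point.  A point which is not p-integral reduces to O. *)
Definition in_E0p (E : wcurve) (p : nat) (R : point) : bool :=
  match R with
  | None => true
  | Some (x, y) =>
    ~~ (p_integral p x && p_integral p y)
    || ~~ (p_zero p (Fx E x y) && p_zero p (Fy E x y))
  end.

Definition in_E0 (E : wcurve) (R : point) : Prop :=
  forall q : nat, prime q -> in_E0p E q R.

Definition least_pos (P : nat -> Prop) (m : nat) : Prop :=
  (0 < m)%N /\ P m /\ forall n, (0 < n)%N -> P n -> (m <= n)%N.

From mathcomp Require Import all_boot all_order all_algebra.
From mathcomp Require Import ring zify.
Set Implicit Arguments. Unset Strict Implicit. Unset Printing Implicit Defensive.
Import Order.TTheory GRing.Theory Num.Theory.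
Local Open Scope ring_scope.

(* Let v be the p-adic valuation, F = f_2 = Fy and G = Fx.  The duplication
   formula gives x(2P) = N / F^2 with N = G^2 - a1 G F - (a2 + 2x) F^2, and
   d(R)^2 is the denominator of x(R), so
     2 v(u_2) = 4 v_p(den x(P)) + 2 v(F) - v_p(den x(2P)).
   If v(x) = -2k < 0, then v(N) = v(x^4) = -8k and v(u_2) = 0.  If x is
   p-integral, so are y, F, G and N: when F is a unit x(2P) is p-integral,
   and when p | F but p does not divide G, v(N) = 0; either way v(u_2) = 0.
   If p divides F and G (singular reduction), p^2 | N, so the denominator of
   x(2P) cannot absorb F and p | u_2.
   For the second statement, nP <> O for all n forces 2(nP) <> O, and a
   rational number is a unit at every prime iff it is 1 or -1. *)

Definition curveF (E : wcurve) (x y : rat) : rat :=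
  y ^+ 2 + cq (a1 E) * x * y + cq (a3 E) * y -
  (x ^+ 3 + cq (a2 E) * x ^+ 2 + cq (a4 E) * x + cq (a6 E)).

Definition negpt (E : wcurve) (R : point) : point :=
  if R is Some (x, y) then Some (x, - y - cq (a1 E) * x - cq (a3 E)) else None.

Definition nonsingular (E : wcurve) : Prop :=
  forall x y, curveF E x y = 0 -> Fx E x y = 0 -> Fy E x y = 0 -> False.

Definition discq (A1 A2 A3 A4 A6 : rat) : rat :=
  let b2 := A1 ^+ 2 + 4 * A2 in
  let b4 := 2 * A4 + A1 * A3 in
  let b6 := A3 ^+ 2 + 4 * A6 in
  let b8 := A1 ^+ 2 * A6 + 4 * A2 * A6 - A1 * A3 * A4 + A2 * A3 ^+ 2 - A4 ^+ 2 in
  - b2 ^+ 2 * b8 - 8 * b4 ^+ 3 - 27 * b6 ^+ 2 + 9 * b2 * b4 * b6.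

Lemma cq_disc E :
  cq (disc E) = discq (cq (a1 E)) (cq (a2 E)) (cq (a3 E)) (cq (a4 E)) (cq (a6 E)).
Proof. by rewrite /cq /disc /discq /= !(rmorphD, rmorphB, rmorphN, rmorphM, rmorphXn). Qed.

(* Invariance of the discriminant under the translation (x, y) -> (x + r, y + t). *)
Lemma discq_translate A1 A2 A3 A4 A6 r t :
  discq A1 A2 A3 A4 A6 =
  discq A1 (A2 + 3 * r) (2 * t + A1 * r + A3)
    (- (A1 * t - 3 * r ^+ 2 - 2 * A2 * r - A4))
    (- (t ^+ 2 + A1 * r * t + A3 * t - (r ^+ 3 + A2 * r ^+ 2 + A4 * r + A6))).
Proof. by rewrite /discq /=; ring. Qed.

Section GroupLaw.

Variable E : wcurve.
Local Notation A1 := (cq (a1 E)).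
Local Notation A2 := (cq (a2 E)).
Local Notation A3 := (cq (a3 E)).
Local Notation A4 := (cq (a4 E)).
Local Notation A6 := (cq (a6 E)).

Lemma on_curveE x y : on_curve E (Some (x, y)) = (curveF E x y == 0).
Proof. by rewrite /= /curveF subr_eq0. Qed.

Lemma curveF_reflect x y : curveF E x (- y - A1 * x - A3) = curveF E x y.
Proof. by rewrite /curveF; ring. Qed.

Lemma curveF_eq0_same_x x y1 y2 : curveF E x y1 = 0 -> curveF E x y2 = 0 ->
  y2 = y1 \/ y1 + y2 + A1 * x + A3 = 0.
Proof.
move=> h1 h2.
have : (y2 - y1) * (y1 + y2 + A1 * x + A3) = 0.
  by rewrite -[RHS](subr0 0) -{1}h2 -h1 /curveF; ring.
by move/eqP; rewrite mulf_eq0 subr_eq0 => /orP [] /eqP; [left | right].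
Qed.

(* On the line y = l x + nu the curve equation is a monic cubic in x whose
   three roots add up to l^2 + a1 l - a2; Fx + l Fy is its derivative. *)
Lemma curveF_tangent x1 l nu :
  let x3 := l ^+ 2 + A1 * l - A2 - x1 - x1 in
  curveF E x3 (l * x3 + nu) = curveF E x1 (l * x1 + nu) +
    (Fx E x1 (l * x1 + nu) + l * Fy E x1 (l * x1 + nu)) * (x3 - x1).
Proof. by rewrite /curveF /Fx /Fy /=; ring. Qed.

Lemma curveF_chord x1 x2 l nu : x1 != x2 ->
  let x3 := l ^+ 2 + A1 * l - A2 - x1 - x2 in
  curveF E x3 (l * x3 + nu) = curveF E x1 (l * x1 + nu) * (x3 - x2) / (x1 - x2)
    + curveF E x2 (l * x2 + nu) * (x3 - x1) / (x2 - x1).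
Proof.
move=> x12 x3; rewrite /x3 /curveF.
have h1 : x1 - x2 != 0 by rewrite subr_eq0.
have h2 : x2 - x1 != 0 by rewrite subr_eq0 eq_sym.
by field; rewrite h1 h2.
Qed.

Lemma curveF_chord_deriv x1 x2 l nu :
  let x3 := l ^+ 2 + A1 * l - A2 - x1 - x2 in
  (x1 - x2) * (Fx E x2 (l * x2 + nu) + l * Fy E x2 (l * x2 + nu)) =
  curveF E x1 (l * x1 + nu) - curveF E x2 (l * x2 + nu)
    + (x1 - x2) * (x2 - x1) * (x3 - x2).
Proof. by rewrite /curveF /Fx /Fy /=; ring. Qed.

Lemma Fy_double x y : y + y + A1 * x + A3 = Fy E x y.
Proof. by rewrite /Fy; ring. Qed.

Lemma Fy_reflect x y : Fy E x (- y - A1 * x - A3) = - Fy E x y.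
Proof. by rewrite /Fy; ring. Qed.

Lemma on_curve_add P Q : on_curve E P -> on_curve E Q -> on_curve E (addpt E P Q).
Proof.
case: P => [[x1 y1]|] // hP; case: Q => [[x2 y2]|] // hQ.
rewrite /addpt; case: ifP => // hc.
move: hP hQ; rewrite !on_curveE => /eqP hP /eqP hQ.
have y_line l x3 nu : - (l + A1) * x3 - nu - A3 = - (l * x3 + nu) - A1 * x3 - A3.
  by ring.
apply/eqP; rewrite y_line curveF_reflect.
have [e|x12] := eqVneq x1 x2.
- subst x2.
  have ey : y2 = y1.
    by case: (curveF_eq0_same_x hP hQ) => // h; move: hc; rewrite eqxx h eqxx.
  subst y2.
  have hF : Fy E x1 y1 != 0.
    by move: hc; rewrite eqxx Fy_double => /negbT.
  set l := _ / _; rewrite curveF_tangent.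
  have -> : l * x1 + (y1 - l * x1) = y1 by rewrite addrC subrK.
  have -> : Fx E x1 y1 + l * Fy E x1 y1 = 0 by move: hF; rewrite /l /Fx /Fy => hF; field.
  by rewrite hP mul0r addr0.
- set l := _ / _; rewrite (curveF_chord _ _ x12).
  have -> : l * x1 + (y1 - l * x1) = y1 by rewrite addrC subrK.
  have -> : l * x2 + (y1 - l * x1) = y2.
    have h21 : x2 - x1 != 0 by rewrite subr_eq0 eq_sym.
    by rewrite /l; field.
  by rewrite hP hQ !mul0r add0r.
Qed.

Lemma addptC P Q : on_curve E P -> on_curve E Q -> addpt E P Q = addpt E Q P.
Proof.
case: P => [[x1 y1]|] // hP; case: Q => [[x2 y2]|] // hQ.
move: hP hQ; rewrite !on_curveE => /eqP hP /eqP hQ.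
have [e|x12] := eqVneq x1 x2.
- subst x2; case: (curveF_eq0_same_x hP hQ) => [-> // | h].
  have h' : y2 + y1 + A1 * x1 + A3 = 0 by rewrite -h; ring.
  by rewrite /= eqxx h h' eqxx.
- have x21 : x2 != x1 by rewrite eq_sym.
  rewrite /= (negbTE x21) /= ?(negbTE x12) ?(negbTE x21).
  have h12 : x1 - x2 != 0 by rewrite subr_eq0.
  have h21 : x2 - x1 != 0 by rewrite subr_eq0 eq_sym.
  by congr (Some (_, _)); field; rewrite ?h12 ?h21.
Qed.

Lemma negptD P Q : on_curve E P -> on_curve E Q ->
  negpt E (addpt E P Q) = addpt E (negpt E P) (negpt E Q).
Proof.
case: P => [[x1 y1]|] // hP; case: Q => [[x2 y2]|] // hQ.
move: hP hQ; rewrite !on_curveE => /eqP hP /eqP hQ.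
have [e|x12] := eqVneq x1 x2; last first.
  have h12 : x1 - x2 != 0 by rewrite subr_eq0.
  have h21 : x2 - x1 != 0 by rewrite subr_eq0 eq_sym.
  rewrite /= ?(negbTE x12) /= ?(negbTE x12).
  by congr (Some (_, _)); field; rewrite ?h12 ?h21.
subst x2; rewrite /= eqxx /=.
have -> : - y1 - A1 * x1 - A3 + (- y2 - A1 * x1 - A3) + A1 * x1 + A3 =
          - (y1 + y2 + A1 * x1 + A3) by ring.
rewrite oppr_eq0; case: ifP => // hs.
have ey : y2 = y1 by case: (curveF_eq0_same_x hP hQ) => // h; rewrite h eqxx in hs.
subst y2; move: hs; rewrite Fy_double => /negbT hF.
have hF' := hF; rewrite -oppr_eq0 -Fy_reflect in hF'.
by congr (Some (_, _)); move: hF hF'; rewrite /Fy => hF hF'; field; rewrite hF hF'.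
Qed.

(* Translating a singular point to the origin kills a3, a4 and a6. *)
Lemma nonsingular_disc : disc E != 0 -> nonsingular E.
Proof.
move=> hd x y hC hx hy; move: hd; rewrite -(intr_eq0 rat) -/(cq _) cq_disc.
rewrite (discq_translate _ _ _ _ _ x y).
move: hC hx hy; rewrite /curveF /Fx /Fy => -> -> -> /negP; apply; apply/eqP.
by rewrite /discq /=; ring.
Qed.

Hypothesis E_nonsingular : nonsingular E.

(* The point with abscissa x3 below is the sum of (x1, y1) and (x2, y2) along
   the line of slope l.  When x3 = x2, nonsingularity is what excludes a
   vertical tangent at (x2, y2). *)
Lemma addpt_line_cancel x1 y1 x2 y2 l :
  curveF E x1 y1 = 0 -> curveF E x2 y2 = 0 -> y2 = l * x2 + (y1 - l * x1) ->
  (x1 = x2 -> Fx E x1 y1 + l * Fy E x1 y1 = 0) ->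
  addpt E (Some (l ^+ 2 + A1 * l - A2 - x1 - x2,
      - (l + A1) * (l ^+ 2 + A1 * l - A2 - x1 - x2) - (y1 - l * x1) - A3))
    (negpt E (Some (x2, y2))) = Some (x1, y1).
Proof.
move=> hP hQ hy ht.
set x3 := l ^+ 2 + A1 * l - A2 - x1 - x2; set nu := y1 - l * x1.
set y3 := - (l + A1) * x3 - nu - A3.
have tangent_at_x2 : x3 = x2 -> Fy E x2 y2 != 0 /\ Fx E x2 y2 + l * Fy E x2 y2 = 0.
  move=> e.
  have hd : Fx E x2 y2 + l * Fy E x2 y2 = 0.
    have [e12|n12] := eqVneq x1 x2.
    - have ey : y2 = y1 by rewrite hy -e12 /nu; ring.
      by rewrite -e12 ey ht.
    - have := curveF_chord_deriv x1 x2 l nu; rewrite /= -/x3 e subrr mulr0 addr0.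
      have -> : l * x1 + nu = y1 by rewrite /nu addrC subrK.
      rewrite -hy hP hQ subrr => /eqP; rewrite mulf_eq0 subr_eq0 (negbTE n12) /=.
      by move/eqP.
  split=> //; apply/negP => /eqP hF; apply: (E_nonsingular (x := x2) (y := y2)) => //.
  by move: hd; rewrite hF mulr0 addr0.
rewrite /=.
have hc : (x3 == x2) && (y3 + (- y2 - A1 * x2 - A3) + A1 * x2 + A3 == 0) = false.
  have [e|] //= := eqVneq x3 x2.
  have [hF _] := tangent_at_x2 e.
  apply/negbTE; move: hF; rewrite -oppr_eq0; congr (_ != _).
  by rewrite /y3 e hy /Fy /nu; ring.
rewrite hc.
set l' := if x3 == x2 then _ else _.
have -> : l' = - (l + A1).
  rewrite /l'; have [e|x32] := eqVneq x3 x2.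
  - have [hF hd] := tangent_at_x2 e.
    have el : l = - Fx E x2 y2 / Fy E x2 y2.
      apply: (mulIf hF); rewrite divfK //; apply/eqP.
      by rewrite -subr_eq0 opprK addrC hd.
    have -> : y3 = - y2 - A1 * x2 - A3 by rewrite /y3 e hy /nu; ring.
    have hF' := hF; rewrite -oppr_eq0 -Fy_reflect in hF'.
    by rewrite e el; move: hF hF'; rewrite /Fy /Fx => hF hF'; field; rewrite hF hF'.
  - have h23 : x2 - x3 != 0 by rewrite subr_eq0 eq_sym.
    by rewrite hy /y3 /nu; field.
by congr (Some (_, _)); rewrite /y3 /x3 /nu; ring.
Qed.

Lemma addptK P Q : on_curve E P -> on_curve E Q -> addpt E (addpt E P Q) (negpt E Q) = P.
Proof.
case: P => [[x1 y1]|] hP; case: Q => [[x2 y2]|] hQ //; last first.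
  by rewrite /= eqxx (_ : _ + _ = 0) ?eqxx //; ring.
move: hP hQ; rewrite !on_curveE => /eqP hP /eqP hQ.
rewrite [addpt E (Some _) (Some _)]/=; case: ifP => hc.
  case/andP: hc => /eqP e /eqP s; subst x2.
  by rewrite /=; congr (Some (_, _)); rewrite -[y1]subr0 -s; ring.
have [e|x12] := eqVneq x1 x2.
- subst x2; rewrite ?eqxx.
  have ey : y2 = y1.
    by case: (curveF_eq0_same_x hP hQ) => // h; move: hc; rewrite eqxx h eqxx.
  subst y2; have hF : Fy E x1 y1 != 0 by move: hc; rewrite eqxx Fy_double => /negbT.
  apply: addpt_line_cancel => //; first by ring.
  by move=> _; move: hF; rewrite /Fx /Fy => hF; field.
- rewrite ?(negbTE x12); apply: addpt_line_cancel => //.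
    have h21 : x2 - x1 != 0 by rewrite subr_eq0 eq_sym.
    by field.
  by move=> e; rewrite e eqxx in x12.
Qed.

Lemma on_curve_neg P : on_curve E P -> on_curve E (negpt E P).
Proof. by case: P => [[x y]|] //; rewrite /negpt !on_curveE curveF_reflect. Qed.

Lemma negptK P : negpt E (negpt E P) = P.
Proof. by case: P => [[x y]|] //=; congr (Some (_, _)); ring. Qed.

Lemma addNKpt P Q : on_curve E P -> on_curve E Q ->
  addpt E P (addpt E (negpt E P) Q) = Q.
Proof.
move=> hP hQ; have hnP := on_curve_neg hP.
rewrite (addptC hnP hQ) addptC ?on_curve_add //.
by have := addptK hQ hnP; rewrite negptK.
Qed.

Lemma mulptS n P : mulpt E n.+1 P = addpt E P (mulpt E n P).
Proof. by rewrite /mulpt iterS. Qed.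

Lemma on_curve_mul n P : on_curve E P -> on_curve E (mulpt E n P).
Proof. by move=> hP; elim: n => [|n IH] //; rewrite mulptS on_curve_add. Qed.

(* If 2 (n P) = O then n P = - n P, whence (n + k) P = - (n - k) P for k <= n
   and in particular (2 n) P = O. *)
Lemma double_mulpt_neq0 P n : on_curve E P ->
  (forall m, (0 < m)%N -> mulpt E m P <> None) -> (0 < n)%N ->
  addpt E (mulpt E n P) (mulpt E n P) <> None.
Proof.
move=> hP hT hn hD.
have hneg : negpt E (mulpt E n P) = mulpt E n P.
  move: hD; case: (mulpt E n P) => [[x y]|] //=.
  case: ifP => // /andP [_ /eqP h] _.
  congr (Some (_, _)); apply/eqP; rewrite -subr_eq0; apply/eqP.
  by rewrite -oppr0 -h; ring.
have reflect_n k : (k <= n)%N -> mulpt E (n + k) P = negpt E (mulpt E (n - k) P).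
  elim: k => [|k IH] hk; first by rewrite addn0 subn0 hneg.
  rewrite addnS mulptS IH 1?ltnW // -(subnSK hk) mulptS.
  by rewrite negptD ?on_curve_mul // addNKpt ?on_curve_neg ?on_curve_mul.
by apply: (hT (n + n)%N); rewrite ?addn_gt0 ?hn // reflect_n // subnn.
Qed.

End GroupLaw.

Definition pval (p : nat) (r : rat) : int :=
  (logn p `|numq r|)%:Z - (logn p `|denq r|)%:Z.

(* [pval_ge p r k] reads v_p(r) >= k with the convention v_p(0) = +oo
   ([pval p 0] itself is 0). *)
Definition pval_ge (p : nat) (r : rat) (k : int) : bool := (r == 0) || (k <= pval p r).

Section Valuation.

Variable p : nat.

Lemma pval_frac (a b : int) : a != 0 -> b != 0 ->
  pval p (a%:~R / b%:~R) = (logn p `|a|)%:Z - (logn p `|b|)%:Z.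
Proof.
move=> a0 b0; set r := a%:~R / b%:~R.
have r0 : r != 0 by rewrite /r mulf_neq0 ?invr_eq0 ?intr_eq0.
have e : numq r * b = a * denq r.
  apply: (@intr_inj rat); rewrite !intrM numqE /r.
  have b0' : (b%:~R : rat) != 0 by rewrite intr_eq0.
  by field.
have := congr1 (fun z : int => logn p `|z|) e; rewrite /= !abszM.
rewrite !lognM ?absz_gt0 ?numq_eq0 ?denq_eq0 // /pval; lia.
Qed.

Lemma pval_int (z : int) : pval p z%:~R = (logn p `|z|)%:Z.
Proof. by rewrite /pval numq_int denq_int /= logn1 subr0. Qed.

Lemma pval_nat n : pval p n%:R = (logn p n)%:Z.
Proof. by rewrite pmulrn pval_int. Qed.

Lemma pval0 : pval p 0 = 0.
Proof. by rewrite (pval_nat 0) logn0. Qed.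

Lemma pvalN r : pval p (- r) = pval p r.
Proof. by rewrite /pval numqN denqN abszN. Qed.

Lemma pvalM x y : x != 0 -> y != 0 -> pval p (x * y) = pval p x + pval p y.
Proof.
move=> x0 y0.
have dx0 : ((denq x)%:~R : rat) != 0 by rewrite intr_eq0 denq_eq0.
have dy0 : ((denq y)%:~R : rat) != 0 by rewrite intr_eq0 denq_eq0.
have -> : x * y = (numq x * numq y)%:~R / (denq x * denq y)%:~R.
  by rewrite !intrM -{1}(divq_num_den x) -{1}(divq_num_den y); field; rewrite dx0 dy0.
rewrite pval_frac ?mulf_neq0 ?numq_eq0 ?denq_eq0 // !abszM.
rewrite !lognM ?absz_gt0 ?numq_eq0 ?denq_eq0 // /pval; lia.
Qed.

Lemma pvalV x : pval p x^-1 = - pval p x.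
Proof.
have [->|x0] := eqVneq x 0; first by rewrite invr0 pval0 oppr0.
have dx0 : ((denq x)%:~R : rat) != 0 by rewrite intr_eq0 denq_eq0.
have nx0 : ((numq x)%:~R : rat) != 0 by rewrite intr_eq0 numq_eq0.
have -> : x^-1 = (denq x)%:~R / (numq x)%:~R.
  by rewrite -{1}(divq_num_den x); field; rewrite dx0 nx0.
rewrite pval_frac ?numq_eq0 ?denq_eq0 // /pval; lia.
Qed.

Lemma pvalX x n : x != 0 -> pval p (x ^+ n) = n%:Z * pval p x.
Proof.
move=> x0; elim: n => [|n IH]; first by rewrite expr0 (pval_nat 1) logn1 mul0r.
by rewrite exprS pvalM ?expf_neq0 // IH; lia.
Qed.

Lemma pval_ge_zero k : pval_ge p 0 k.
Proof. by rewrite /pval_ge eqxx. Qed.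

Lemma pval_geE r k : r != 0 -> pval_ge p r k = (k <= pval p r).
Proof. by move=> r0; rewrite /pval_ge (negbTE r0). Qed.

Lemma pval_geW r k k' : k' <= k -> pval_ge p r k -> pval_ge p r k'.
Proof. by rewrite /pval_ge => le_k /orP [-> // | /(le_trans le_k) ->]; rewrite orbT. Qed.

Lemma pval_ge_int z : pval_ge p z%:~R 0.
Proof. by rewrite /pval_ge pval_int orbT. Qed.

Lemma pval_ge_nat n : pval_ge p n%:R 0.
Proof. by rewrite /pval_ge pval_nat orbT. Qed.

Lemma pval_geN x k : pval_ge p x k -> pval_ge p (- x) k.
Proof. by rewrite /pval_ge oppr_eq0 pvalN. Qed.

Lemma pval_geM_le x y k1 k2 k : pval_ge p x k1 -> pval_ge p y k2 ->
  k <= k1 + k2 -> pval_ge p (x * y) k.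
Proof.
have [->|x0] := eqVneq x 0; first by rewrite mul0r pval_ge_zero.
have [->|y0] := eqVneq y 0; first by rewrite mulr0 pval_ge_zero.
by rewrite !pval_geE ?mulf_neq0 // pvalM // => h1 h2 h; lia.
Qed.

Lemma pval_geX_le x n k1 k : pval_ge p x k1 -> k <= n%:Z * k1 -> pval_ge p (x ^+ n) k.
Proof.
have [->|x0] := eqVneq x 0.
  case: n => [|n] _ hk; last by rewrite expr0n pval_ge_zero.
  by rewrite expr0 (pval_geE _ (oner_neq0 _)) (pval_nat 1) logn1; lia.
rewrite !pval_geE ?expf_neq0 // pvalX // => h1 h.
by apply: le_trans h _; rewrite ler_wpM2l.
Qed.

Lemma pval_geM x y k1 k2 : pval_ge p x k1 -> pval_ge p y k2 -> pval_ge p (x * y) (k1 + k2).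
Proof. by move=> hx hy; apply: pval_geM_le hx hy _. Qed.

Lemma pval_geX x n k : pval_ge p x k -> pval_ge p (x ^+ n) (n%:Z * k).
Proof. by move=> hx; apply: pval_geX_le hx _. Qed.

Hypothesis p_pr : prime p.

Lemma dvdn_logn_gt0 m : (0 < m)%N -> (p %| m)%N = (0 < logn p m)%N.
Proof. by move=> m_gt0; rewrite -(pfactor_dvdn 1) ?expn1. Qed.

Lemma pvalD_ge x y k : x != 0 -> y != 0 -> x + y != 0 ->
  k <= pval p x -> k <= pval p y -> k <= pval p (x + y).
Proof.
move=> x0 y0 xy0 kx ky.
have dx0 : denq x != 0 by rewrite denq_eq0.
have dy0 : denq y != 0 by rewrite denq_eq0.
set s := numq x * denq y + numq y * denq x.
have e : x + y = s%:~R / (denq x * denq y)%:~R.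
  have dx0' : ((denq x)%:~R : rat) != 0 by rewrite intr_eq0.
  have dy0' : ((denq y)%:~R : rat) != 0 by rewrite intr_eq0.
  by rewrite /s !intrD !intrM -{1}(divq_num_den x) -{1}(divq_num_den y); field; rewrite dx0' dy0'.
have s0 : s != 0 by apply: contraNneq xy0 => s0; rewrite e s0 mul0r.
have nx0 : numq x != 0 by rewrite numq_eq0.
have ny0 : numq y != 0 by rewrite numq_eq0.
rewrite e pval_frac ?mulf_neq0 // abszM lognM ?absz_gt0 //.
move: kx ky; rewrite /pval => kx ky.
set m : int := k + (logn p `|denq x|)%:Z + (logn p `|denq y|)%:Z.
have [m_le0|m_gt0] := lerP m 0; first by lia.
suff : (`|m| <= logn p `|s|)%N by lia.
rewrite -pfactor_dvdn ?absz_gt0 // -[(p ^ _)%N]/(`|(p ^ `|m|)%N%:Z|%N) -dvdzE.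
by apply: rpredD; rewrite dvdzE /= pfactor_dvdn ?abszM ?lognM ?absz_gt0 //; lia.
Qed.

Lemma pvalD_dominant x y : x != 0 -> pval_ge p y (pval p x + 1) ->
  x + y != 0 /\ pval p (x + y) = pval p x.
Proof.
move=> x0; have [->|y0] := eqVneq y 0; first by rewrite addr0.
rewrite /pval_ge (negbTE y0) /= => hy.
have xy0 : x + y != 0.
  apply: contraTneq hy => /eqP; rewrite addr_eq0 => /eqP ->.
  by rewrite pvalN -ltNge ltzD1.
split=> //; apply/eqP; rewrite eq_le pvalD_ge //; last by lia.
rewrite andbT leNgt; apply/negP => hlt.
have : pval p x + 1 <= pval p (x + y + - y).
  by apply: pvalD_ge; rewrite ?oppr_eq0 ?addrK ?pvalN //; lia.
by rewrite addrK; lia.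
Qed.

Lemma pval_geD_le x y k1 k2 k : pval_ge p x k1 -> pval_ge p y k2 ->
  k <= k1 -> k <= k2 -> pval_ge p (x + y) k.
Proof.
move=> hx hy h1 h2.
have [->|x0] := eqVneq x 0; first by rewrite add0r; apply: pval_geW hy.
have [->|y0] := eqVneq y 0; first by rewrite addr0; apply: pval_geW hx.
have [->|xy0] := eqVneq (x + y) 0; first exact: pval_ge_zero.
move: hx hy; rewrite !pval_geE // => hx hy.
by apply: pvalD_ge => //; [apply: le_trans hx | apply: le_trans hy].
Qed.

Lemma pval_geD x y k : pval_ge p x k -> pval_ge p y k -> pval_ge p (x + y) k.
Proof. by move=> hx hy; apply: pval_geD_le hx hy _ _. Qed.

Lemma logn_num_den_eq0 r : logn p `|numq r| = 0%N \/ logn p `|denq r| = 0%N.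
Proof.
have [->|n_gt0] := posnP (logn p `|numq r|); first by left.
have [->|d_gt0] := posnP (logn p `|denq r|); first by right.
move: n_gt0 d_gt0; rewrite !logn_gt0 !mem_primes => /and3P [_ _ pn] /and3P [_ _ pd].
have : (p %| gcdn `|numq r| `|denq r|)%N by rewrite dvdn_gcd pn pd.
by rewrite (eqP (coprime_num_den r)) dvdn1 => /eqP p1; move: p_pr; rewrite p1.
Qed.

Lemma logn_denq r : (logn p `|denq r|)%:Z = Num.max 0 (- pval p r).
Proof. by rewrite /pval; case: (logn_num_den_eq0 r) => ->; lia. Qed.

Lemma logn_denq_le r k : pval_ge p r k -> (logn p `|denq r|)%:Z <= Num.max 0 (- k).
Proof. by rewrite logn_denq /pval_ge => /orP [/eqP -> | ]; rewrite ?pval0; lia. Qed.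

Lemma p_unitE r : p_unit p r = (r != 0) && (pval p r == 0).
Proof.
rewrite /p_unit; have [->|r0] := eqVneq r 0; first by rewrite dvdn0.
rewrite !dvdn_logn_gt0 ?absz_gt0 ?numq_eq0 ?denq_eq0 // /pval.
by case: (logn_num_den_eq0 r) => ->; lia.
Qed.

Lemma p_integralE r : p_integral p r = pval_ge p r 0.
Proof.
rewrite /p_integral /pval_ge; have [->|r0] /= := eqVneq r 0.
  by rewrite dvdn1 neq_ltn prime_gt1 ?orbT.
rewrite dvdn_logn_gt0 ?absz_gt0 ?denq_eq0 // /pval.
by case: (logn_num_den_eq0 r) => ->; lia.
Qed.

Lemma p_zeroE r : pval_ge p r 0 -> p_zero p r = pval_ge p r 1.
Proof.
rewrite /p_zero /pval_ge; have [->|r0] //= := eqVneq r 0; first by rewrite dvdn0.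
rewrite dvdn_logn_gt0 ?absz_gt0 ?numq_eq0 // /pval.
by case: (logn_num_den_eq0 r) => ->; lia.
Qed.

End Valuation.

(* Proves [pval_ge p e k] for a polynomial expression [e] in the curve
   coefficients and in quantities with known lower bounds in the context,
   leaving linear side conditions on the exponents. *)
Ltac pval_leaf := match goal with
  | |- is_true (pval_ge _ (cq _) _) => eapply pval_ge_int
  | |- is_true (pval_ge _ (_%:R) _) => eapply pval_ge_nat
  | |- is_true (pval_ge _ 1 _) => eapply (pval_ge_nat _ 1)
  | |- _ => eassumption
  end.
Ltac pval_step := match goal with
  | |- is_true (prime _) => eassumption
  | |- is_true (pval_ge _ (_ + _) _) => eapply pval_geD
  | |- is_true (pval_ge _ (- _) _) => eapply pval_geN
  | |- is_true (pval_ge _ (_ * _) ?k) =>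
      tryif is_evar k then eapply pval_geM else eapply pval_geM_le
  | |- is_true (pval_ge _ (_ ^+ _) ?k) =>
      tryif is_evar k then eapply pval_geX else eapply pval_geX_le
  | |- is_true (pval_ge _ _ ?k) =>
      tryif is_evar k then pval_leaf else (eapply pval_geW; [ | pval_leaf ])
  end.
Ltac pval_bound := repeat progress (try pval_step).

Section PointValuation.

Variables (E : wcurve) (p : nat).
Hypothesis p_pr : prime p.
Local Notation A1 := (cq (a1 E)).
Local Notation A2 := (cq (a2 E)).
Local Notation A3 := (cq (a3 E)).
Local Notation A4 := (cq (a4 E)).
Local Notation A6 := (cq (a6 E)).

Lemma curveF_eq0P x y : curveF E x y = 0 ->
  y ^+ 2 + (A1 * x * y + A3 * y) = x ^+ 3 + (A2 * x ^+ 2 + A4 * x + A6).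
Proof. by move=> h; apply/eqP; rewrite -subr_eq0; apply/eqP; rewrite -h /curveF; ring. Qed.

(* In the equation, y^2 or x^3 dominates unless 2 v(y) = 3 v(x). *)
Lemma pval_pole x y : curveF E x y = 0 -> x != 0 -> pval p x < 0 ->
  exists k : int, [/\ 0 < k, pval p x = -2 * k, pval p y = -3 * k & y != 0].
Proof.
move=> hC x0 vx_lt0; have eC := curveF_eq0P hC.
have hx : pval_ge p x (pval p x) by rewrite pval_geE.
have [rhs0 v_rhs] : x ^+ 3 + (A2 * x ^+ 2 + A4 * x + A6) != 0 /\
    pval p (x ^+ 3 + (A2 * x ^+ 2 + A4 * x + A6)) = pval p (x ^+ 3).
  by apply: pvalD_dominant; rewrite ?expf_neq0 // pvalX //; pval_bound; lia.
rewrite pvalX // in v_rhs.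
have y0 : y != 0.
  by apply: contraNneq rhs0 => y0; rewrite -eC y0; apply/eqP; ring.
have hy : pval_ge p y (pval p y) by rewrite pval_geE.
have [vy_lt|vy_ge] := ltP (pval p y) (pval p x); last first.
  have : pval_ge p (y ^+ 2 + (A1 * x * y + A3 * y)) (3%:Z * pval p x + 1).
    by pval_bound; lia.
  by rewrite eC pval_geE // v_rhs; lia.
have [_ v_lhs] : y ^+ 2 + (A1 * x * y + A3 * y) != 0 /\
    pval p (y ^+ 2 + (A1 * x * y + A3 * y)) = pval p (y ^+ 2).
  by apply: pvalD_dominant; rewrite ?expf_neq0 // pvalX //; pval_bound; lia.
rewrite eC v_rhs pvalX // in v_lhs.
by exists (pval p x - pval p y); split => //; lia.
Qed.

Lemma pval_ge_y0 x y : curveF E x y = 0 -> pval_ge p x 0 -> pval_ge p y 0.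
Proof.
move=> hC hx0; have [->|y0] := eqVneq y 0; first exact: pval_ge_zero.
rewrite pval_geE //; have [// | vy_lt0] := lerP 0 (pval p y).
have eC := curveF_eq0P hC.
have hy : pval_ge p y (pval p y) by rewrite pval_geE.
have [lhs0 v_lhs] : y ^+ 2 + (A1 * x * y + A3 * y) != 0 /\
    pval p (y ^+ 2 + (A1 * x * y + A3 * y)) = pval p (y ^+ 2).
  by apply: pvalD_dominant; rewrite ?expf_neq0 // pvalX //; pval_bound; lia.
have : pval_ge p (x ^+ 3 + (A2 * x ^+ 2 + A4 * x + A6)) 0 by pval_bound; lia.
by rewrite -eC pval_geE // v_lhs pvalX //; lia.
Qed.

Lemma logn_denq_even x y : curveF E x y = 0 -> ~~ odd (logn p `|denq x|).
Proof.
move=> hC; have := logn_denq p_pr x.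
have [vx_ge0|vx_lt0] := leP 0 (pval p x).
  by move=> e; rewrite (_ : logn _ _ = 0%N) //; lia.
have x0 : x != 0 by apply: contraTneq vx_lt0 => ->; rewrite pval0.
have [k [k_gt0 vx _ _]] := pval_pole hC x0 vx_lt0.
by rewrite vx => e; rewrite (_ : logn _ _ = `|k|.*2)%N ?odd_double //; lia.
Qed.

End PointValuation.

Lemma isqrt_sq d : isqrt (d * d) = d.
Proof.
apply/eqP; rewrite eqn_leq; apply/andP; split.
  by apply/bigmax_leqP => k hk; nia.
have hd : (d < (d * d).+1)%N by nia.
exact: (@leq_bigmax_cond _ (fun k : 'I_(d * d).+1 => (k * k <= d * d)%N)
  (fun k : 'I_(d * d).+1 => nat_of_ord k) (Ordinal hd)).
Qed.

Lemma square_of_even_logn D : (0 < D)%N ->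
  (forall q, prime q -> ~~ odd (logn q D)) -> exists d, D = (d * d)%N.
Proof.
move=> D_gt0 D_even; exists (\prod_(q <- primes D) q ^ (logn q D)./2)%N.
rewrite -big_split /= {1}(prod_prime_decomp D_gt0) prime_decompE big_map /=.
apply: eq_big_seq => q; rewrite mem_primes => /and3P [q_pr _ _].
by rewrite -expnD addnn -{1}(odd_double_half (logn q D)) (negbTE (D_even q q_pr)).
Qed.

Lemma dpt_sqr E x y : curveF E x y = 0 ->
  (dpt (Some (x, y)) * dpt (Some (x, y)))%N = `|denq x|%N /\ (0 < dpt (Some (x, y)))%N.
Proof.
move=> hC; have den_gt0 : (0 < `|denq x|)%N by rewrite absz_gt0 denq_eq0.
have [d e] := square_of_even_logn den_gt0 (fun q q_pr => logn_denq_even q_pr hC).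
by rewrite /= e isqrt_sq; split=> //; move: den_gt0; rewrite e muln_gt0 andbb.
Qed.

(* x(2P) = dbl_num / f_2^2; on the curve dbl_num equals the classical
   numerator x^4 - b4 x^2 - 2 b6 x - b8 of the duplication formula. *)
Definition dbl_num (E : wcurve) (x y : rat) : rat :=
  Fx E x y ^+ 2 - cq (a1 E) * Fx E x y * Fy E x y - (cq (a2 E) + 2 * x) * Fy E x y ^+ 2.

Definition dbl_num_tail (E : wcurve) (x : rat) : rat :=
  let A1 := cq (a1 E) in let A2 := cq (a2 E) in let A3 := cq (a3 E) in
  let A4 := cq (a4 E) in let A6 := cq (a6 E) in
  let b4 := 2 * A4 + A1 * A3 in
  let b6 := A3 ^+ 2 + 4 * A6 in
  let b8 := A1 ^+ 2 * A6 + 4 * A2 * A6 - A1 * A3 * A4 + A2 * A3 ^+ 2 - A4 ^+ 2 in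
  - (b4 * x ^+ 2) - 2 * b6 * x - b8.

Section Doubling.

Variables (E : wcurve) (p : nat) (x y : rat).
Hypotheses (p_pr : prime p) (hC : curveF E x y = 0) (hF : Fy E x y != 0).
Local Notation F := (Fy E x y).
Local Notation G := (Fx E x y).
Local Notation N := (dbl_num E x y).
Local Notation P := (Some (x, y)).

Lemma dbl_numE : N = x ^+ 4 + dbl_num_tail E x.
Proof.
have -> : N = x ^+ 4 + dbl_num_tail E x
    - (cq (a1 E) ^+ 2 + 4 * cq (a2 E) + 8 * x) * curveF E x y.
  by rewrite /dbl_num /dbl_num_tail /curveF /Fx /Fy /=; ring.
by rewrite hC mulr0 subr0.
Qed.

Lemma addpt_double : exists Y, addpt E P P = Some (N / F ^+ 2, Y).
Proof.
rewrite /= eqxx Fy_double (negbTE hF) /=; eexists; congr (Some (_, _)).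
by move: hF; rewrite /dbl_num /Fy /Fx => F0; field.
Qed.

Lemma pval_u2 : u2 E P != 0 /\
  2 * pval p (u2 E P) = 4 * (logn p `|denq x|)%:Z + 2 * pval p F
                        - (logn p `|denq (N / F ^+ 2)|)%:Z.
Proof.
have [Y P2] := addpt_double.
have hP : on_curve E P by rewrite on_curveE hC.
have hC2 : curveF E (N / F ^+ 2) Y = 0.
  by have := on_curve_add hP hP; rewrite P2 on_curveE => /eqP.
have [sq1 d1_gt0] := dpt_sqr hC; have [sq2 d2_gt0] := dpt_sqr hC2.
rewrite /u2 P2; rewrite /= in sq1 d1_gt0 sq2 d2_gt0 *.
set d1 := isqrt _ in sq1 d1_gt0 *; set d2 := isqrt _ in sq2 d2_gt0 *.
have d10 : (d1%:R : rat) != 0 by rewrite pnatr_eq0 -lt0n.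
have d20 : (d2%:R : rat) != 0 by rewrite pnatr_eq0 -lt0n.
split; first by rewrite mulf_neq0 ?invr_eq0 ?mulf_neq0 ?expf_neq0.
rewrite pvalM ?invr_eq0 ?mulf_neq0 ?expf_neq0 // pvalM ?expf_neq0 // pvalV pvalX //.
rewrite !pval_nat -sq1 -sq2 !lognM //; lia.
Qed.

Lemma pval_ge_dbl_x k : pval_ge p N k -> pval_ge p (N / F ^+ 2) (k - 2 * pval p F).
Proof.
move=> hN; apply: pval_geM_le hN _ _; last by apply: lerD.
by rewrite pval_geE ?invr_eq0 ?expf_neq0 // pvalV pvalX.
Qed.

Lemma pval_dbl_x : N != 0 -> pval p (N / F ^+ 2) = pval p N - 2 * pval p F.
Proof. by move=> N0; rewrite pvalM ?invr_eq0 ?expf_neq0 // pvalV pvalX. Qed.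

Lemma pval_u2_pole : pval p x < 0 -> pval p (u2 E P) = 0.
Proof.
move=> vx_lt0; have x0 : x != 0 by apply: contraTneq vx_lt0 => ->; rewrite pval0.
have [k [k_gt0 vx vy y0]] := pval_pole p_pr hC x0 vx_lt0.
have hx : pval_ge p x (-2 * k) by rewrite pval_geE // vx.
have hy : pval_ge p y (-3 * k) by rewrite pval_geE // vy.
have vF_ge : -3 * k <= pval p F by rewrite -pval_geE // /Fy; pval_bound; lia.
have [N0 vN] : N != 0 /\ pval p N = pval p (x ^+ 4).
  rewrite dbl_numE; apply: pvalD_dominant; rewrite ?expf_neq0 // pvalX // vx.
  by rewrite /dbl_num_tail /=; pval_bound; lia.
have [_ vu] := pval_u2; move: vu.
rewrite !(logn_denq p_pr) pval_dbl_x // vN pvalX // vx; lia.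
Qed.

Section Integral.

Hypothesis x_int : pval_ge p x 0.

Let y_int : pval_ge p y 0 := pval_ge_y0 p_pr hC x_int.

Lemma pval_ge_Fy0 : pval_ge p F 0.
Proof. by have hy := y_int; rewrite /Fy; pval_bound; lia. Qed.

Lemma pval_ge_Fx0 : pval_ge p G 0.
Proof. by have hy := y_int; rewrite /Fx; pval_bound; lia. Qed.

Lemma pval_u2_Fy_unit : pval p F = 0 -> pval p (u2 E P) = 0.
Proof.
move=> vF0; have hF0 := pval_ge_Fy0; have hG0 := pval_ge_Fx0.
have hN : pval_ge p N 0 by rewrite /dbl_num; pval_bound; lia.
have [_ vu] := pval_u2.
have := logn_denq_le p_pr x_int; have := logn_denq_le p_pr (pval_ge_dbl_x hN).
lia.
Qed.

Lemma pval_u2_Fx_unit : pval_ge p F 1 -> ~~ pval_ge p G 1 -> pval p (u2 E P) = 0.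
Proof.
move=> hF1 hG1; have hG0 := pval_ge_Fx0.
have G0 : G != 0 by apply: contraNneq hG1 => ->; apply: pval_ge_zero.
have vG0 : pval p G = 0 by move: hG0 hG1; rewrite !pval_geE //; lia.
have [N0 vN] : N != 0 /\ pval p N = pval p (G ^+ 2).
  have -> : N = G ^+ 2 + (- (cq (a1 E) * G * F) - (cq (a2 E) + 2 * x) * F ^+ 2).
    by rewrite /dbl_num; ring.
  by apply: pvalD_dominant; rewrite ?expf_neq0 // pvalX // vG0; pval_bound; lia.
have [_ vu] := pval_u2; have := logn_denq_le p_pr x_int.
have vF1 : 1 <= pval p F by rewrite -pval_geE.
by move: vu; rewrite (logn_denq p_pr (N / _)) pval_dbl_x // vN pvalX // vG0; lia.
Qed.

Lemma pval_u2_singular : pval_ge p F 1 -> pval_ge p G 1 -> 0 < pval p (u2 E P).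
Proof.
move=> hF1 hG1; have vF1 : 1 <= pval p F by rewrite -pval_geE.
have hN : pval_ge p N 2 by rewrite /dbl_num; pval_bound; lia.
have [_ vu] := pval_u2.
have := logn_denq_le p_pr x_int; have := logn_denq_le p_pr (pval_ge_dbl_x hN).
lia.
Qed.

End Integral.

Lemma in_E0p_p_unit_u2 : in_E0p E p P = p_unit p (u2 E P).
Proof.
have [u0 _] := pval_u2.
rewrite (p_unitE p_pr) u0 /= /in_E0p !(p_integralE p_pr).
have [x_int|x_nint] := boolP (pval_ge p x 0); last first.
  apply/esym/eqP/pval_u2_pole; move: x_nint; rewrite /pval_ge negb_or -ltNge.
  by case/andP.
have hF0 := pval_ge_Fy0 x_int; have hG0 := pval_ge_Fx0 x_int.
rewrite (pval_ge_y0 p_pr hC x_int) /= !(p_zeroE p_pr) //.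
have [hF1|hF1] := boolP (pval_ge p F 1); last first.
  rewrite andbF /=; apply/esym/eqP/(pval_u2_Fy_unit x_int).
  by move: hF0 hF1; rewrite !pval_geE //; lia.
have [hG1|hG1] /= := boolP (pval_ge p G 1).
  by apply/esym/negbTE; rewrite neq_lt (pval_u2_singular x_int) ?orbT.
by apply/esym/eqP/(pval_u2_Fx_unit x_int).
Qed.

End Doubling.

Lemma Fy_neq0_of_double E x y :
  addpt E (Some (x, y)) (Some (x, y)) <> None -> Fy E x y != 0.
Proof. by move=> h; apply/negP => /eqP hF; apply: h; rewrite /= eqxx Fy_double hF eqxx. Qed.

Lemma all_p_unit_norm1 (r : rat) : (forall q, prime q -> p_unit q r) <-> `|r| = 1.
Proof.
split=> [r_unit | r_norm1 q q_pr]; last first.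
  by move: r_norm1 => /eqP; rewrite eqr_norml ler01 andbT /p_unit => /orP [] /eqP ->;
    rewrite /= dvdn1 neq_ltn prime_gt1 ?orbT.
have abs1 (z : int) : (0 < `|z|)%N -> (forall q, prime q -> ~~ (q %| `|z|))%N -> `|z|%N = 1%N.
  move=> z_gt0 z_coprime; have [z_lt1|z_gt1|//] := ltngtP `|z|%N 1; first by lia.
  by have := z_coprime _ (pdiv_prime z_gt1); rewrite pdiv_dvd.
have num1 : `|numq r|%N = 1%N.
  apply: abs1 => [|q /r_unit /andP [] //]; rewrite absz_gt0 numq_eq0.
  by apply: contraPneq (r_unit 2%N isT) => ->; rewrite /p_unit dvdn0.
have den1 : `|denq r|%N = 1%N.
  by apply: abs1 => [|q /r_unit /andP [] //]; rewrite absz_gt0 denq_eq0.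
have den_r : denq r = 1 by rewrite -absz_denq den1.
by rewrite -(divq_num_den r) den_r divr1 -intr_norm -abszE num1.
Qed.

Lemma eq_least_pos (P Q : nat -> Prop) m :
  (forall n, (0 < n)%N -> P n <-> Q n) -> least_pos P m <-> least_pos Q m.
Proof.
move=> PQ; rewrite /least_pos.
by split=> [] [m_gt0 [Hm m_min]]; do !split=> //;
  [apply/(PQ m m_gt0) | move=> n n_gt0 /(PQ n n_gt0); apply: m_min
  |apply/(PQ m m_gt0) | move=> n n_gt0 /(PQ n n_gt0); apply: m_min].
Qed.

Unset Implicit Arguments.

Theorem proposition1p8 (p : nat) (E : wcurve) (P : point) :
  prime p -> disc E != 0 -> on_curve E P -> P <> None ->
  (addpt E P P <> None -> (in_E0p E p P <-> p_unit p (u2 E P))) /\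
  ((forall n : nat, (0 < n)%N -> mulpt E n P <> None) ->
   forall m : nat,
     least_pos (fun n => in_E0 E (mulpt E n P)) m <->
     least_pos (fun n => `|u2 E (mulpt E n P)| = 1) m).
Proof.
move=> p_pr disc_neq0 P_on _.
have E_ns := nonsingular_disc disc_neq0.
have local_criterion q (Q : point) : prime q -> on_curve E Q -> addpt E Q Q <> None ->
    in_E0p E q Q = p_unit q (u2 E Q).
  case: Q => [[x y]|] // q_pr; rewrite on_curveE => /eqP hC /Fy_neq0_of_double hF.
  exact: in_E0p_p_unit_u2.
split=> [P2_neq0 | mul_neq0 m]; first by rewrite local_criterion.
apply: eq_least_pos => n n_gt0; rewrite -all_p_unit_norm1.
have nP_on := on_curve_mul n P_on.
have nP2 := double_mulpt_neq0 E_ns P_on mul_neq0 n_gt0.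
by split=> h q q_pr; move: (h q q_pr); rewrite local_criterion.
Qed.
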